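(* For any $\alpha > 1$ and $x \geq 0$, \[ \overline{K}_\alpha(x) \geq (\alpha - 1)\,\overline{K}_{\alpha-1}(x). \]
   Context: $K_\alpha(x) := \int_0^\infty e^{-x\cosh t}\cosh(\alpha t)\,{\rm d}t$ for $\alpha\in\mathbb{R}$, $x > 0$; $\overline{K}_\alpha(x) := 2^{1-\alpha}x^\alpha K_\alpha(x)$ for $x>0$, and $\overline{K}_\alpha(0) := \Gamma(\alpha)$ for $\alpha > 0$. *)

From Stdlib Require Import Reals.
From Coquelicot Require Import Coquelicot.
Open Scope R_scope.

Definition BesselK (alpha x : R) : R :=
  RInt_gen (fun t => exp (- x * cosh t) * cosh (alpha * t))
           (at_point 0) (Rbar_locally p_infty).

Definition Gamma (a : R) : R :=
  RInt_gen (fun t => Rpower t (a - 1) * exp (- t))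
           (at_right 0) (Rbar_locally p_infty).

Definition Kbar (alpha x : R) : R :=
  if Rlt_dec 0 x then Rpower 2 (1 - alpha) * Rpower x alpha * BesselK alpha x
  else Gamma alpha.

From Stdlib Require Import Reals Lra.
From Coquelicot Require Import Coquelicot.
Open Scope R_scope.

(* For x > 0, dividing by 2^(1-α) x^(α-1) reduces the claim to
   x K_α(x) >= 2(α-1) K_(α-1)(x).  Integrating the derivative of
   sinh((α-1)t) e^(-x cosh t) over [0, ∞) and using
   cosh(αt) - cosh((α-2)t) = 2 sinh((α-1)t) sinh t gives the recurrence
   x K_α(x) - 2(α-1) K_(α-1)(x) = x K_(α-2)(x) >= 0.  For x = 0 the claim is
   the functional equation Γ(α) = (α-1) Γ(α-1), obtained in the same way from
   the derivative of t^(α-1) e^(-t).  All improper integrals converge by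
   comparison, through the Cauchy criterion, with bounded or exponentially
   decaying functions whose primitives have limits. *)

Ltac continuous_by_derive :=
  apply (ex_derive_continuous (K := R_AbsRing) (V := R_NormedModule)); auto_derive; auto.

Lemma exp_le_compat x y : x <= y -> exp x <= exp y.
Proof. intros [Hlt | ->]; [left; apply exp_increasing | right]; auto. Qed.

Lemma ln_le_sub_1 w : 0 < w -> ln w <= w - 1.
Proof. intros Hw. generalize (exp_ineq1_le (ln w)). rewrite exp_ln by exact Hw. lra. Qed.

Lemma mul_ln_sub_le c d y : 0 < c -> 0 < d -> 0 < y ->
  c * ln y - d * y <= c * (ln (c / d) - 1).
Proof.
  intros Hc Hd Hy.
  assert (Hln := ln_le_sub_1 (d * y / c) ltac:(apply Rdiv_lt_0_compat; nra)).
  rewrite ln_div, ln_mult in Hln by (try apply Rmult_lt_0_compat; auto).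
  rewrite ln_div by assumption.
  assert (Hmul : c * (ln d + ln y - ln c) <= c * (d * y / c - 1))
    by (apply Rmult_le_compat_l; lra).
  replace (c * (d * y / c - 1)) with (d * y - c) in Hmul by (field; lra).
  lra.
Qed.

Lemma Rpower_mul_pred x a : 0 < x -> Rpower x a = x * Rpower x (a - 1).
Proof.
  intros Hx. replace a with (1 + (a - 1)) at 1 by ring.
  rewrite Rpower_plus, Rpower_1 by exact Hx. reflexivity.
Qed.

Lemma cosh_sub_cosh u v : cosh (u + v) - cosh (u - v) = 2 * sinh u * sinh v.
Proof.
  unfold cosh, sinh.
  replace (- (u + v)) with (- u + - v) by ring.
  replace (u - v) with (u + - v) by ring.
  replace (- (u + - v)) with (- u + v) by ring.
  rewrite !exp_plus. field.
Qed.

Lemma Rabs_cosh_le_exp s : Rabs (cosh s) <= exp (Rabs s).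
Proof.
  unfold cosh. generalize (exp_pos s) (exp_pos (- s)). intros Hpos Hneg.
  rewrite Rabs_pos_eq by lra.
  destruct (Rle_dec 0 s).
  - rewrite Rabs_pos_eq by lra. generalize (exp_le_compat (- s) s ltac:(lra)). lra.
  - rewrite Rabs_left by lra. generalize (exp_le_compat s (- s) ltac:(lra)). lra.
Qed.

Lemma Rabs_sinh_le_exp s : Rabs (sinh s) <= exp (Rabs s).
Proof.
  unfold sinh. generalize (exp_pos s) (exp_pos (- s)). intros Hpos Hneg.
  destruct (Rle_dec 0 s).
  - assert (Hle := exp_le_compat (- s) s ltac:(lra)).
    rewrite Rabs_pos_eq with (x := s), Rabs_pos_eq; lra.
  - assert (Hle := exp_le_compat s (- s) ltac:(lra)).
    rewrite Rabs_left with (r := s), Rabs_left1; lra.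
Qed.

Lemma exp_mul_cosh_decay c z k : 0 <= c -> 0 < k -> 0 < z ->
  exists C, forall t, exp (c * t) * exp (- z * cosh t) <= C * exp (- (k * t)).
Proof.
  intros Hc Hk Hz. exists (exp ((c + k) * (ln ((c + k) / (z / 2)) - 1))). intros t.
  rewrite <- !exp_plus. apply exp_le_compat.
  assert (Hmax := mul_ln_sub_le (c + k) (z / 2) (exp t) ltac:(lra) ltac:(lra) (exp_pos t)).
  rewrite ln_exp in Hmax.
  assert (Hcosh : exp t / 2 <= cosh t) by (unfold cosh; generalize (exp_pos (- t)); lra).
  nra.
Qed.

Lemma Rpower_mul_exp_decay b k : 0 < b -> k < 1 ->
  exists C, forall t, 0 < t -> Rpower t b * exp (- t) <= C * exp (- (k * t)).
Proof.
  intros Hb Hk. exists (exp (b * (ln (b / (1 - k)) - 1))). intros t Ht.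
  unfold Rpower. rewrite <- !exp_plus. apply exp_le_compat.
  assert (Hmax := mul_ln_sub_le b (1 - k) t Hb ltac:(lra) Ht). lra.
Qed.

Lemma filterlim_0_of_abs_le {T : Type} {F : (T -> Prop) -> Prop} {FF : Filter F} (h g : T -> R) :
  filterlim g F (locally 0) -> F (fun t => Rabs (h t) <= g t) -> filterlim h F (locally 0).
Proof.
  intros Hg Hle. apply filterlim_locally. intros eps.
  generalize (filter_and _ _ (proj1 (filterlim_locally g 0) Hg eps) Hle).
  apply filter_imp. intros t [Hgt Ht].
  change (Rabs (g t - 0) < eps) in Hgt. change (Rabs (h t - 0) < eps).
  rewrite Rminus_0_r in *. generalize (Rle_abs (g t)). lra.
Qed.

Lemma filterlim_exp_decay C k : 0 < k ->
  filterlim (fun t => C * exp (- (k * t))) (Rbar_locally p_infty) (locally 0).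
Proof.
  intros Hk.
  assert (Hexp : is_lim (fun t => exp (- (k * t))) p_infty 0).
  { apply (filterlim_comp _ _ _ (fun t => - (k * t)) exp _ (Rbar_locally m_infty)).
    - intros P [M HM]. exists (- M / k). intros t Ht. apply HM.
      apply Rmult_lt_compat_l with (r := k) in Ht; [|exact Hk].
      replace (k * (- M / k)) with (- M) in Ht by (field; lra). lra.
    - exact is_lim_exp_m. }
  generalize (is_lim_scal_l _ C _ _ Hexp). simpl. rewrite Rmult_0_r. auto.
Qed.

Lemma filterlim_Rpower_at_right_0 b : 0 < b ->
  filterlim (fun t => Rpower t b) (at_right 0) (locally 0).
Proof.
  intros Hb. unfold Rpower.
  apply (filterlim_comp _ _ _ (fun t => b * ln t) exp _ (Rbar_locally m_infty));
    [|exact is_lim_exp_m].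
  apply (filterlim_comp _ _ _ ln (fun y => b * y) _ (Rbar_locally m_infty)); [exact is_lim_ln_0|].
  intros P [M HM]. exists (M / b). intros y Hy. apply HM.
  apply Rmult_lt_compat_l with (r := b) in Hy; [|exact Hb].
  replace (b * (M / b)) with M in Hy by (field; lra). exact Hy.
Qed.

Definition dominated_on (D : R -> Prop) (f g G : R -> R) : Prop :=
  forall t, D t -> continuous f t /\ Rabs (f t) <= g t /\ is_derive G t (g t) /\ continuous g t.

Section Domination.

Variables (D : R -> Prop) (f g G : R -> R).
Hypothesis D_convex : forall u v t, D u -> D v -> u <= t <= v -> D t.
Hypothesis f_dominated : dominated_on D f g G.

Let D_segment u v t : D u -> D v -> Rmin u v <= t <= Rmax u v -> D t.
Proof.
  intros Hu Hv Ht. destruct (Rle_or_lt u v) as [Huv | Hvu].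
  - rewrite Rmin_left, Rmax_right in Ht by exact Huv. eauto.
  - rewrite Rmin_right, Rmax_left in Ht by lra. eauto.
Qed.

Lemma ex_RInt_dominated u v : D u -> D v -> ex_RInt f u v.
Proof.
  intros Hu Hv. apply (ex_RInt_continuous (V := R_CompleteNormedModule)).
  intros t Ht. apply f_dominated. eauto.
Qed.

Lemma RInt_abs_le_dominated u v : D u -> D v -> Rabs (RInt f u v) <= Rabs (G v - G u).
Proof.
  assert (Hle : forall u v, D u -> D v -> u <= v -> Rabs (RInt f u v) <= G v - G u).
  { intros u' v' Hu Hv Huv. apply (norm_RInt_le f g u' v'); [exact Huv | | |].
    - intros t Ht. apply f_dominated. eauto.
    - apply (RInt_correct (V := R_CompleteNormedModule)), ex_RInt_dominated; assumption.
    - apply (is_RInt_derive G g); intros t Ht; apply f_dominated; eauto. }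
  intros Hu Hv. destruct (Rle_or_lt u v) as [Huv | Hvu].
  - generalize (Hle u v Hu Hv Huv) (Rle_abs (G v - G u)). lra.
  - apply Rlt_le in Hvu.
    rewrite <- opp_RInt_swap by (apply ex_RInt_dominated; assumption).
    change (Rabs (- RInt f v u) <= Rabs (G v - G u)).
    rewrite Rabs_Ropp, Rabs_minus_sym.
    generalize (Hle v u Hv Hu Hvu) (Rle_abs (G u - G v)). lra.
Qed.

End Domination.

Lemma ex_lim_of_dominated_increments {F : (R -> Prop) -> Prop} {FF : ProperFilter F}
  (Phi G : R -> R) (D : R -> Prop) lG :
  F D -> (forall u v, D u -> D v -> Rabs (Phi v - Phi u) <= Rabs (G v - G u)) ->
  filterlim G F (locally lG) -> exists l, filterlim Phi F (locally l).
Proof.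
  intros HD Hincr HG. apply (filterlim_locally_cauchy Phi). intros eps.
  destruct (proj2 (filterlim_locally_cauchy G) (ex_intro _ lG HG) eps) as [P [HP HGP]].
  exists (fun u => P u /\ D u). split; [apply filter_and; assumption|].
  intros u v [Pu Du] [Pv Dv].
  specialize (HGP u v Pu Pv). specialize (Hincr u v Du Dv).
  change (Rabs (G v - G u) < eps) in HGP. change (Rabs (Phi v - Phi u) < eps). lra.
Qed.

Lemma is_RInt_gen_pinfty_of_lim (f : R -> R) c l :
  (forall b, c <= b -> ex_RInt f c b) ->
  filterlim (fun b => RInt f c b) (Rbar_locally p_infty) (locally l) ->
  is_RInt_gen f (at_point c) (Rbar_locally p_infty) l.
Proof.
  intros Hex Hlim P HP.
  apply Filter_prod with (Q := fun a => a = c) (R := fun b => c <= b /\ P (RInt f c b)).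
  - reflexivity.
  - apply filter_and; [exists c; intros; lra | exact (Hlim P HP)].
  - intros a b -> [Hb HPb]. exists (RInt f c b). split; [|exact HPb].
    apply (RInt_correct (V := R_CompleteNormedModule)), Hex, Hb.
Qed.

Lemma is_RInt_gen_at_right_of_lim (f : R -> R) a c l : a < c ->
  (forall a', a < a' <= c -> ex_RInt f a' c) ->
  filterlim (fun a' => RInt f a' c) (at_right a) (locally l) ->
  is_RInt_gen f (at_right a) (at_point c) l.
Proof.
  intros Hac Hex Hlim P HP.
  apply Filter_prod with (Q := fun a' => (a < a' <= c) /\ P (RInt f a' c)) (R := fun b => b = c).
  - apply filter_and; [|exact (Hlim P HP)].
    exists (mkposreal (c - a) ltac:(lra)). intros y Hy Hay.
    change (Rabs (y - a) < c - a) in Hy. apply Rabs_def2 in Hy. lra.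
  - reflexivity.
  - intros a' b [Ha' HPa'] ->. exists (RInt f a' c). split; [|exact HPa'].
    apply (RInt_correct (V := R_CompleteNormedModule)), Hex, Ha'.
Qed.

Lemma ex_RInt_gen_pinfty_dominated (f g G : R -> R) c lG :
  dominated_on (Rle c) f g G -> filterlim G (Rbar_locally p_infty) (locally lG) ->
  ex_RInt_gen f (at_point c) (Rbar_locally p_infty).
Proof.
  intros Hdom HG.
  assert (D_convex : forall u v t, c <= u -> c <= v -> u <= t <= v -> c <= t) by (intros; lra).
  destruct (ex_lim_of_dominated_increments (F := Rbar_locally p_infty)
             (fun b => RInt f c b) G (Rle c) lG)
    as [l Hl]; [exists c; intros; lra | | exact HG |].
  - intros u v Hu Hv.
    rewrite <- (RInt_Chasles f c u v) by (apply (ex_RInt_dominated (Rle c) f g G); auto; lra).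
    change (Rabs (RInt f c u + RInt f u v - RInt f c u) <= Rabs (G v - G u)).
    rewrite Rplus_minus_l.
    apply (RInt_abs_le_dominated (Rle c) f g G); assumption.
  - exists l. apply is_RInt_gen_pinfty_of_lim; [|exact Hl].
    intros b Hb. apply (ex_RInt_dominated (Rle c) f g G); auto; lra.
Qed.

Lemma ex_RInt_gen_at_right_dominated (f g G : R -> R) a c lG : a < c ->
  dominated_on (fun t => a < t <= c) f g G -> filterlim G (at_right a) (locally lG) ->
  ex_RInt_gen f (at_right a) (at_point c).
Proof.
  intros Hac Hdom HG.
  set (D := fun t => a < t <= c).
  assert (D_convex : forall u v t, D u -> D v -> u <= t <= v -> D t)
    by (unfold D; intros; lra).
  destruct (ex_lim_of_dominated_increments (F := at_right a)
             (fun a' => RInt f a' c) G D lG) as [l Hl];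
    [| | exact HG |].
  - exists (mkposreal (c - a) ltac:(lra)). intros y Hy Hay.
    change (Rabs (y - a) < c - a) in Hy. apply Rabs_def2 in Hy. unfold D. lra.
  - intros u v Hu Hv.
    rewrite <- (RInt_Chasles f u v c)
      by (apply (ex_RInt_dominated D f g G); auto; unfold D in *; lra).
    change (Rabs (RInt f v c - (RInt f u v + RInt f v c)) <= Rabs (G v - G u)).
    rewrite Rabs_minus_sym, Rplus_minus_r. apply (RInt_abs_le_dominated D f g G); assumption.
  - exists l. apply is_RInt_gen_at_right_of_lim; [exact Hac | | exact Hl].
    intros a' Ha'. apply (ex_RInt_dominated D f g G); auto; unfold D; lra.
Qed.

Lemma ex_RInt_gen_pinfty_exp_dominated (f : R -> R) c C k : 0 < k ->
  (forall t, c <= t -> continuous f t) ->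
  (forall t, c <= t -> Rabs (f t) <= C * exp (- (k * t))) ->
  ex_RInt_gen f (at_point c) (Rbar_locally p_infty).
Proof.
  intros Hk Hcont Hle.
  apply (ex_RInt_gen_pinfty_dominated f (fun t => C * exp (- (k * t)))
           (fun t => - (C / k) * exp (- (k * t))) c 0).
  - intros t Ht. split; [auto | split; [auto | split]].
    + auto_derive; [exact I | field; lra].
    + continuous_by_derive.
  - apply filterlim_exp_decay, Hk.
Qed.

Lemma ex_RInt_gen_at_right_bounded (f : R -> R) a c M : a < c ->
  (forall t, a < t <= c -> continuous f t) ->
  (forall t, a < t <= c -> Rabs (f t) <= M) ->
  ex_RInt_gen f (at_right a) (at_point c).
Proof.
  intros Hac Hcont Hle.
  apply (ex_RInt_gen_at_right_dominated f (fun _ => M) (fun t => M * t) a c (M * a) Hac).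
  - intros t Ht. split; [auto | split; [auto | split]].
    + auto_derive; [exact I | ring].
    + apply continuous_const.
  - apply (filterlim_filter_le_1 _ (filter_le_within _)).
    apply (continuous_mult (fun _ => M) (fun t => t));
      [apply continuous_const | apply continuous_id].
Qed.

Definition on_segments (P : R -> Prop) (ab : R * R) : Prop :=
  forall x, Rmin (fst ab) (snd ab) <= x <= Rmax (fst ab) (snd ab) -> P x.

Lemma on_segments_at_point_pinfty c (P : R -> Prop) : (forall x, c <= x -> P x) ->
  filter_prod (at_point c) (Rbar_locally p_infty) (on_segments P).
Proof.
  intros HP. apply Filter_prod with (Q := fun a => a = c) (R := fun b => c < b).
  - reflexivity.
  - exists c. auto.
  - intros a b -> Hb x Hx. simpl in Hx.
    rewrite Rmin_left, Rmax_right in Hx by lra. apply HP. lra.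
Qed.

Lemma on_segments_at_right_pinfty a (P : R -> Prop) : (forall x, a < x -> P x) ->
  filter_prod (at_right a) (Rbar_locally p_infty) (on_segments P).
Proof.
  intros HP. apply Filter_prod with (Q := fun u => a < u) (R := fun v => a < v).
  - exists (mkposreal 1 Rlt_0_1). auto.
  - exists a. auto.
  - intros u v Hu Hv x Hx. simpl in Hx. apply HP.
    apply Rlt_le_trans with (Rmin u v); [apply Rmin_glb_lt |]; lra.
Qed.

Lemma is_RInt_gen_derive {Fa Fb : (R -> Prop) -> Prop} {FFa : Filter Fa} {FFb : Filter Fb}
  (h dh : R -> R) la lb :
  filter_prod Fa Fb (on_segments (fun x => is_derive h x (dh x) /\ continuous dh x)) ->
  filterlim h Fa (locally la) -> filterlim h Fb (locally lb) ->
  is_RInt_gen dh Fa Fb (lb - la).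
Proof.
  intros Hder Ha Hb P HP.
  assert (Hlim : filterlim (fun ab : R * R => h (snd ab) - h (fst ab))
                   (filter_prod Fa Fb) (locally (lb - la))).
  { apply (filterlim_comp_2 (G := locally lb) (H := locally la)
             (fun ab : R * R => h (snd ab)) (fun ab => h (fst ab)) Rminus).
    - eapply filterlim_comp; [apply filterlim_snd | exact Hb].
    - eapply filterlim_comp; [apply filterlim_fst | exact Ha].
    - apply (filterlim_comp_2 (G := locally lb) (H := locally (opp la))
               fst (fun ab => opp (snd ab)) plus).
      + apply filterlim_fst.
      + eapply filterlim_comp;
          [apply filterlim_snd | apply (filterlim_opp (K := R_AbsRing) (V := R_NormedModule))].
      + apply (filterlim_plus (K := R_AbsRing) (V := R_NormedModule) lb (opp la)). }
  assert (HPlim : filter_prod Fa Fb (fun ab => P (h (snd ab) - h (fst ab))))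
    by exact (Hlim P HP).
  unfold filtermapi. generalize (filter_and _ _ Hder HPlim). apply filter_imp.
  intros [a b] [Hab HPab]. exists (h b - h a). split; [|exact HPab].
  apply (is_RInt_derive h dh); intros x Hx; apply Hab, Hx.
Qed.

Lemma is_RInt_gen_pinfty_ge0 (f : R -> R) c l :
  is_RInt_gen f (at_point c) (Rbar_locally p_infty) l ->
  (forall t, c <= t -> 0 <= f t) -> 0 <= l.
Proof.
  intros Hf Hpos.
  assert (Hnorm : Rabs l <= l).
  { apply (RInt_gen_norm (Fa := at_point c) (Fb := Rbar_locally p_infty) f f l l);
      [| | exact Hf | exact Hf].
    - apply Filter_prod with (Q := fun a => a = c) (R := fun b => c < b);
        [reflexivity | exists c; auto | intros a b -> Hb; simpl; lra].
    - apply Filter_prod with (Q := fun a => a = c) (R := fun b => c < b);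
        [reflexivity | exists c; auto |].
      intros a b -> Hb x Hx. change (Rabs (f x) <= f x).
      simpl in Hx. rewrite Rabs_pos_eq; [lra | apply Hpos; lra]. }
  generalize (Rabs_pos l). lra.
Qed.

Lemma is_RInt_gen_BesselK a z : 0 < z ->
  is_RInt_gen (fun t => exp (- z * cosh t) * cosh (a * t))
    (at_point 0) (Rbar_locally p_infty) (BesselK a z).
Proof.
  intros Hz. apply (RInt_gen_correct (V := R_CompleteNormedModule)).
  destruct (exp_mul_cosh_decay (Rabs a) z 1 (Rabs_pos a) Rlt_0_1 Hz) as [C HC].
  apply (ex_RInt_gen_pinfty_exp_dominated _ 0 C 1 Rlt_0_1).
  - intros t _. unfold cosh. continuous_by_derive.
  - intros t Ht.
    rewrite Rabs_mult, (Rabs_pos_eq (exp _)) by (left; apply exp_pos).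
    apply Rle_trans with (exp (- z * cosh t) * exp (Rabs a * t)).
    + apply Rmult_le_compat_l; [left; apply exp_pos |].
      rewrite <- (Rabs_pos_eq t Ht) at 2. rewrite <- Rabs_mult. apply Rabs_cosh_le_exp.
    + rewrite Rmult_comm. apply HC.
Qed.

Lemma BesselK_ge0 a z : 0 < z -> 0 <= BesselK a z.
Proof.
  intros Hz. apply (is_RInt_gen_pinfty_ge0 _ 0 _ (is_RInt_gen_BesselK a z Hz)).
  intros t _. apply Rmult_le_pos; [left; apply exp_pos |].
  unfold cosh. generalize (exp_pos (a * t)) (exp_pos (- (a * t))). lra.
Qed.

Lemma BesselK_recurrence a z : 0 < z ->
  z * BesselK a z - 2 * (a - 1) * BesselK (a - 1) z = z * BesselK (a - 2) z.
Proof.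
  intros Hz. set (b := a - 1).
  set (h t := sinh (b * t) * exp (- z * cosh t)).
  set (dh t := b * (exp (- z * cosh t) * cosh (b * t))
               - z * sinh (b * t) * sinh t * exp (- z * cosh t)).
  assert (Hdh : is_RInt_gen dh (at_point 0) (Rbar_locally p_infty) (0 - h 0)).
  { apply (is_RInt_gen_derive h dh).
    - apply (on_segments_at_point_pinfty 0). intros x _. split.
      + unfold h, dh, sinh, cosh. auto_derive; [exact I | unfold Rdiv, Rminus; ring].
      + unfold dh, sinh, cosh. continuous_by_derive.
    - intros P HP. exact (locally_singleton _ _ HP).
    - destruct (exp_mul_cosh_decay (Rabs b) z 1 (Rabs_pos b) Rlt_0_1 Hz) as [C HC].
      apply (filterlim_0_of_abs_le h (fun t => C * exp (- (1 * t)))).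
      + apply filterlim_exp_decay, Rlt_0_1.
      + exists 0. intros t Ht. unfold h.
        rewrite Rabs_mult, (Rabs_pos_eq (exp _)) by (left; apply exp_pos).
        eapply Rle_trans; [| apply HC].
        apply Rmult_le_compat_r; [left; apply exp_pos |].
        rewrite <- (Rabs_pos_eq t) at 2 by lra. rewrite <- Rabs_mult. apply Rabs_sinh_le_exp. }
  assert (Hsum := is_RInt_gen_plus _ _ _ _
    (is_RInt_gen_minus _ _ _ _ (is_RInt_gen_scal _ z _ (is_RInt_gen_BesselK a z Hz))
                               (is_RInt_gen_scal _ (2 * b) _ (is_RInt_gen_BesselK b z Hz)))
    (is_RInt_gen_scal _ 2 _ Hdh)).
  assert (Hshift := is_RInt_gen_scal _ z _ (is_RInt_gen_BesselK (a - 2) z Hz)).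
  apply (is_RInt_gen_ext _ (fun t => scal z (exp (- z * cosh t) * cosh ((a - 2) * t)))) in Hsum.
  - generalize (eq_trans (eq_sym (is_RInt_gen_unique _ _ Hshift)) (is_RInt_gen_unique _ _ Hsum)).
    unfold h, plus, minus, scal, opp; simpl; unfold mult; simpl.
    rewrite Rmult_0_r, sinh_0. intros H. rewrite H. unfold plus. simpl. ring.
  - apply filter_forall. intros ab t _.
    assert (Hcosh : cosh ((a - 2) * t) = cosh (a * t) - 2 * sinh (b * t) * sinh t).
    { rewrite <- cosh_sub_cosh.
      replace (b * t + t) with (a * t) by (unfold b; ring).
      replace (b * t - t) with ((a - 2) * t) by (unfold b; ring). ring. }
    unfold dh, plus, minus, scal, opp; simpl; unfold mult, plus; simpl.
    rewrite Hcosh. ring.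
Qed.

Lemma is_RInt_gen_Gamma a : 1 < a ->
  is_RInt_gen (fun t => Rpower t (a - 1) * exp (- t))
    (at_right 0) (Rbar_locally p_infty) (Gamma a).
Proof.
  intros Ha. apply (RInt_gen_correct (V := R_CompleteNormedModule)).
  assert (Hcont : forall t, 0 < t -> continuous (fun t => Rpower t (a - 1) * exp (- t)) t)
    by (intros t Ht; unfold Rpower; continuous_by_derive).
  assert (Hpos : forall t, 0 <= Rpower t (a - 1) * exp (- t))
    by (intros t; apply Rmult_le_pos; left; apply exp_pos).
  apply (ex_RInt_gen_Chasles _ 1).
  - apply (ex_RInt_gen_at_right_bounded _ 0 1 1 Rlt_0_1); [intros t Ht; apply Hcont; lra |].
    intros t Ht. rewrite Rabs_pos_eq by apply Hpos.
    assert (Hpow : Rpower t (a - 1) <= 1).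
    { replace 1 with (Rpower 1 (a - 1)) at 2
        by (unfold Rpower; rewrite ln_1, Rmult_0_r; apply exp_0).
      apply Rle_Rpower_l; lra. }
    assert (Hexp : exp (- t) <= 1) by (rewrite <- exp_0; apply exp_le_compat; lra).
    generalize (exp_pos (- t)) (exp_pos ((a - 1) * ln t)). unfold Rpower in *. nra.
  - destruct (Rpower_mul_exp_decay (a - 1) (1 / 2)) as [C HC]; [lra | lra |].
    apply (ex_RInt_gen_pinfty_exp_dominated _ 1 C (1 / 2)); [lra | intros t Ht; apply Hcont; lra |].
    intros t Ht. rewrite Rabs_pos_eq by apply Hpos. apply HC. lra.
Qed.

(* Convergence of Γ(a-1) is not assumed (for a < 2 its integrand is unbounded
   near 0); it follows from (a-1) t^(a-2) e^(-t) = (t^(a-1) e^(-t))' + t^(a-1) e^(-t). *)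
Lemma Gamma_recurrence a : 1 < a -> Gamma a = (a - 1) * Gamma (a - 1).
Proof.
  intros Ha. set (b := a - 1). assert (Hb : 0 < b) by (unfold b; lra).
  set (h t := Rpower t b * exp (- t)).
  set (dh t := b * Rpower t (b - 1) * exp (- t) - Rpower t b * exp (- t)).
  assert (Hdh : is_RInt_gen dh (at_right 0) (Rbar_locally p_infty) (0 - 0)).
  { apply (is_RInt_gen_derive h dh).
    - apply (on_segments_at_right_pinfty 0). intros x Hx. split.
      + unfold h, dh, Rpower. auto_derive; [exact Hx |].
        replace (exp (b * ln x)) with (x * exp ((b - 1) * ln x))
          by (symmetry; apply Rpower_mul_pred, Hx).
        field. lra.
      + unfold dh, Rpower. continuous_by_derive.
    - apply (filterlim_0_of_abs_le h (fun t => Rpower t b));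
        [apply filterlim_Rpower_at_right_0, Hb |].
      exists (mkposreal 1 Rlt_0_1). intros t _ Ht. unfold h.
      rewrite Rabs_pos_eq by (apply Rmult_le_pos; left; apply exp_pos).
      assert (Hexp : exp (- t) <= 1) by (rewrite <- exp_0; apply exp_le_compat; lra).
      generalize (exp_pos (b * ln t)). unfold Rpower. nra.
    - destruct (Rpower_mul_exp_decay b (1 / 2) Hb) as [C HC]; [lra |].
      apply (filterlim_0_of_abs_le h (fun t => C * exp (- (1 / 2 * t))));
        [apply filterlim_exp_decay; lra |].
      exists 0. intros t Ht. unfold h.
      rewrite Rabs_pos_eq by (apply Rmult_le_pos; left; apply exp_pos).
      apply HC, Ht. }
  assert (Hsum := is_RInt_gen_scal _ (/ b) _
                    (is_RInt_gen_plus _ _ _ _ Hdh (is_RInt_gen_Gamma a Ha))).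
  apply (is_RInt_gen_ext _ (fun t => Rpower t (b - 1) * exp (- t))) in Hsum.
  - change (Gamma b) with
      (RInt_gen (fun t => Rpower t (b - 1) * exp (- t)) (at_right 0) (Rbar_locally p_infty)).
    rewrite (is_RInt_gen_unique _ _ Hsum).
    unfold scal, plus; simpl; unfold mult, plus; simpl. field. lra.
  - apply (filter_imp (on_segments (fun t => 0 < t))); [| apply on_segments_at_right_pinfty; auto].
    intros ab Hab t Ht. assert (Ht0 : 0 < t) by (apply Hab; lra).
    unfold dh, scal, plus; simpl; unfold mult, plus; simpl. change (a - 1) with b. field. lra.
Qed.

Theorem lemma3p1 (alpha x : R) (halpha : 1 < alpha) (hx : 0 <= x) :
  Kbar alpha x >= (alpha - 1) * Kbar (alpha - 1) x.
Proof.
  unfold Kbar. destruct (Rlt_dec 0 x) as [Hx | _].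
  - rewrite (Rpower_mul_pred x alpha Hx), (Rpower_mul_pred 2 (1 - (alpha - 1))) by lra.
    replace (1 - (alpha - 1) - 1) with (1 - alpha) by ring.
    assert (Hrec := BesselK_recurrence alpha x Hx).
    assert (Hscale : 0 < Rpower 2 (1 - alpha) * Rpower x (alpha - 1))
      by (apply Rmult_lt_0_compat; apply exp_pos).
    assert (Hgap := Rmult_le_pos _ _ (Rlt_le _ _ Hscale)
                      (Rmult_le_pos _ _ (Rlt_le _ _ Hx) (BesselK_ge0 (alpha - 2) x Hx))).
    nra.
  - rewrite (Gamma_recurrence alpha halpha). lra.
Qed.
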